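(* Let $n\geq 1$, let $c^S<\sup_{f\in\mathcal{P}}q(f)$ and $c^D\geq 0$, and let $\Gamma_1\subseteq\mathcal{P}^n$ be the fixed-window IPT acceptance region for $\mathbf{H}_1$ with parameters $(c^S,c^D)$ (defined in the context). Then $$P_\infty\left(\hat f_{X_1^n}\in\Gamma_1\right)\leq (n+1)^m\exp\left(-n\left(c^D+\frac{\left(\left(c^S-q_0\right)^+\right)^2}{2L^2}\right)\right).$$
   Context: Setup. Let $\mathcal{A}=\{a_1,\dots,a_m\}$ be a finite alphabet and $\mathcal{P}$ the set of probability mass functions (p.m.f.s) on $\mathcal{A}$, with the $\ell_1$ norm $\|f-f'\|_1=\sum_a|f(a)-f'(a)|$. $I(f\|f')=\sum_{a}f(a)\log\frac{f(a)}{f'(a)}$ is the Kullback–Leibler divergence (natural logarithm, $0\log 0=0$). A known pre-change p.m.f. $f_0\in\mathcal{P}$ is fixed. $q:\mathcal{P}\to\mathbb{R}$ is quasiconcave and $L$-Lipschitz with respect to $\ell_1$ (i.e. $|q(f)-q(f')|\leq L\|f-f'\|_1$), with $q_0:=q(f_0)<0<\underline{q}$, and the set of possible post-change p.m.f.s $\mathcal{P}_1$ is a nonempty subset of $\{f: q(f)\geq\underline{q}\}$. Observations $X_1,X_2,\dots$ take values in $\mathcal{A}$; under $P_{f_1,t_1}$ ($f_1\in\mathcal{P}_1$, $t_1\geq 1$) the variables $X_1,\dots,X_{t_1-1}$ are i.i.d. $f_0$ and $X_{t_1},X_{t_1+1},\dots$ are i.i.d. $f_1$, independent of the former; $P_\infty$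 denotes the law under which all $X_k$ are i.i.d. $f_0$. For $i\leq j$, $\hat f_{X_i^j}(a)=\frac{1}{j-i+1}\#\{i\leq k\leq j: X_k=a\}$ is the empirical p.m.f., and $\mathcal{P}^n$ is the (finite) set of p.m.f.s realizable as empirical p.m.f.s of $n$ letters of $\mathcal{A}$. $(x)^+=\max\{x,0\}$. Fixed-window IPT. Given $c=(c^S,c^D)$ with $c^D\geq0$ and $c^S<\sup_f q(f)$, let $f^*=\arg\min_{f\in\mathcal{P}:\,q(f)\geq c^S}I(f\|f_0)$ be the I-projection of $f_0$ onto the closed convex set $\{q\geq c^S\}$. For sample size $n$, set $\Gamma_1=\{f\in\mathcal{P}^n: q(f)\geq c^S\text{ and } I(f\|f^* )\geq c^D\}$ and $\Gamma_0=\mathcal{P}^n\setminus\Gamma_1$; the test declares $\mathbf{H}_1$ (change/alternative) iff $\hat f_{X_1^n}\in\Gamma_1$. *)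

(* classical reals. Alphabet A = {0,...,m-1} (letters are nats < m). *)
From Stdlib Require Import Reals Lra List Classical ClassicalDescription.
Import ListNotations.
Open Scope R_scope.

Fixpoint sumR (m : nat) (F : nat -> R) : R :=
  match m with O => 0 | S k => sumR k F + F k end.

(* p.m.f. on the alphabet {0,...,m-1} (values at a >= m are irrelevant) *)
Definition pmf (m : nat) (f : nat -> R) : Prop :=
  (forall a, (a < m)%nat -> 0 <= f a) /\ sumR m f = 1.

Definition l1 (m : nat) (f g : nat -> R) : R := sumR m (fun a => Rabs (f a - g a)).

(* support condition: f << g on the alphabet *)
Fixpoint abs_cont (m : nat) (f g : nat -> R) : bool :=
  match m with
  | O => true
  | S k => abs_cont k f g &&
           (if Req_EM_T (g k) 0 then (if Req_EM_T (f k) 0 then true else false) else true)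
  end.

Definition kl_term (x y : R) : R := if Req_EM_T x 0 then 0 else x * ln (x / y).

(* KL divergence I(f||g), with None = +infinity *)
Definition KL (m : nat) (f g : nat -> R) : option R :=
  if abs_cont m f g then Some (sumR m (fun a => kl_term (f a) (g a))) else None.

Definition ext_le (u v : option R) : Prop :=
  match u, v with
  | _, None => True
  | None, Some _ => False
  | Some x, Some y => x <= y
  end.

Definition KL_ge (m : nat) (f g : nat -> R) (c : R) : Prop := ext_le (Some c) (KL m f g).

Definition quasiconcave (m : nat) (q : (nat -> R) -> R) : Prop :=
  forall f g lam, pmf m f -> pmf m g -> 0 <= lam <= 1 ->
    Rmin (q f) (q g) <= q (fun a => lam * f a + (1 - lam) * g a).

Definition lipschitz (m : nat) (q : (nat -> R) -> R) (L : R) : Prop :=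
  forall f g, pmf m f -> pmf m g -> Rabs (q f - q g) <= L * l1 m f g.

Definition is_Iproj (m : nat) (q : (nat -> R) -> R) (cS : R) (f0 fstar : nat -> R) : Prop :=
  pmf m fstar /\ cS <= q fstar /\
  forall f, pmf m f -> cS <= q f -> ext_le (KL m fstar f0) (KL m f f0).

Fixpoint count (a : nat) (x : list nat) : nat :=
  match x with [] => O | b :: y => if Nat.eqb b a then S (count a y) else count a y end.
Definition emp (x : list nat) : nat -> R := fun a => INR (count a x) / INR (length x).

Definition Gamma1 (m : nat) (q : (nat -> R) -> R) (cS cD : R) (fstar : nat -> R)
  (f : nat -> R) : Prop := cS <= q f /\ KL_ge m f fstar cD.

Fixpoint words (m n : nat) : list (list nat) :=
  match n with
  | O => [[]]
  | S k => flat_map (fun w => map (fun a => a :: w) (seq 0 m)) (words m k)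
  end.

Definition word_prob (f0 : nat -> R) (w : list nat) : R :=
  fold_right (fun a acc => f0 a * acc) 1 w.

Definition indic (P : Prop) : R := if excluded_middle_informative P then 1 else 0.

Definition Pinf (m n : nat) (f0 : nat -> R) (E : (nat -> R) -> Prop) : R :=
  fold_right Rplus 0 (map (fun w => word_prob f0 w * indic (E (emp w))) (words m n)).

(* Write D(f||g) for the Kullback-Leibler divergence and
   r = ((cS - q f0)^+)^2 / (2 L^2).  The proof has an analytic and a
   combinatorial half.

   Analytic half: every p.m.f. f in the acceptance region Gamma1 satisfies
   D(f||f0) >= cD + r.  Since q is quasiconcave, {q >= cS} is convex, so the
   I-projection fstar is optimal along the segment from fstar to f; a
   first-order analysis of that segment gives the Pythagorean inequality
   D(f||f0) >= D(fstar||f0) + D(f||fstar), and D(f||fstar) >= cD in Gamma1.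
   Pinsker's inequality D(fstar||f0) >= |fstar - f0|_1^2 / 2 together with
   L |fstar - f0|_1 >= q fstar - q f0 >= cS - q f0 gives D(fstar||f0) >= r.

   Combinatorial half (method of types): a word w of length n with empirical
   p.m.f. femp has f0^n(w) = femp^n(w) exp(-n D(femp||f0)), and the sum of the
   maximum-likelihood probabilities femp^n(w) over all words is at most the
   number (n+1)^m of count vectors. *)

From Stdlib Require Import Reals Lra Lia List Classical ClassicalDescription.
From Coquelicot Require Coquelicot.
Import ListNotations.
Open Scope R_scope.

Lemma sumR_plus m F G : sumR m (fun a => F a + G a) = sumR m F + sumR m G.
Proof. induction m as [|m IH]; simpl; [ring | rewrite IH; ring]. Qed.

Lemma sumR_scal m c F : sumR m (fun a => c * F a) = c * sumR m F.
Proof. induction m as [|m IH]; simpl; [ring | rewrite IH; ring]. Qed.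

Lemma sumR_minus m F G : sumR m (fun a => F a - G a) = sumR m F - sumR m G.
Proof. induction m as [|m IH]; simpl; [ring | rewrite IH; ring]. Qed.

Lemma sumR_ext m F G : (forall a, (a < m)%nat -> F a = G a) -> sumR m F = sumR m G.
Proof. induction m as [|m IH]; intros H; simpl; [reflexivity | rewrite IH, H; auto]. Qed.

Lemma sumR_le m F G : (forall a, (a < m)%nat -> F a <= G a) -> sumR m F <= sumR m G.
Proof.
  induction m as [|m IH]; intros H; simpl; [lra |].
  assert (sumR m F <= sumR m G) by (apply IH; intros; apply H; lia).
  assert (F m <= G m) by (apply H; lia).
  lra.
Qed.

Lemma sumR_nonneg m F : (forall a, (a < m)%nat -> 0 <= F a) -> 0 <= sumR m F.
Proof.
  induction m as [|m IH]; intros H; simpl; [lra |].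
  assert (0 <= sumR m F) by (apply IH; intros; apply H; lia).
  assert (0 <= F m) by (apply H; lia).
  lra.
Qed.

Lemma sumR_zero_each m F : (forall a, (a < m)%nat -> 0 <= F a) -> sumR m F <= 0 ->
  forall a, (a < m)%nat -> F a = 0.
Proof.
  induction m as [|m IH]; intros H Hs a Ha; [lia |]. simpl in Hs.
  assert (0 <= sumR m F) by (apply sumR_nonneg; auto).
  assert (0 <= F m) by auto.
  destruct (Nat.eq_dec a m) as [->|Hne]; [lra |].
  apply IH; auto; lra || lia.
Qed.

Lemma l1_nonneg m f g : 0 <= l1 m f g.
Proof. apply sumR_nonneg. intros; apply Rabs_pos. Qed.

Lemma div_nonneg x y : 0 <= x -> 0 < y -> 0 <= x / y.
Proof. intros Hx Hy. unfold Rdiv. apply Rmult_le_pos; [exact Hx | left; apply Rinv_0_lt_compat, Hy]. Qed.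

Lemma ln_div x y : 0 < x -> 0 < y -> ln (x / y) = ln x - ln y.
Proof.
  intros Hx Hy. unfold Rdiv.
  rewrite ln_mult, ln_Rinv; try lra; auto. apply Rinv_0_lt_compat; auto.
Qed.

Lemma ln_le_sub1 x : 0 < x -> ln x <= x - 1.
Proof. intros Hx. pose proof (exp_ineq1_le (ln x)) as H. rewrite exp_ln in H; lra. Qed.

Lemma ln_ge_1_sub_inv x : 0 < x -> 1 - / x <= ln x.
Proof.
  intros Hx. pose proof (ln_le_sub1 (/ x) (Rinv_0_lt_compat _ Hx)) as H.
  rewrite ln_Rinv in H; lra.
Qed.

Lemma ln_le_compat x y : 0 < x -> x <= y -> ln x <= ln y.
Proof. intros Hx [Hxy | ->]; [left; apply ln_increasing; auto | lra]. Qed.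

Lemma exp_le_compat x y : x <= y -> exp x <= exp y.
Proof. intros [Hxy | ->]; [left; apply exp_increasing; auto | lra]. Qed.

(* The calculus input of Pinsker's inequality: for u > 0,
   3 (u-1)^2 <= (2u+4) (u ln u - u + 1).  Both sides vanish to second order at
   u = 1; two applications of the mean value theorem show that the difference is
   minimal there. *)
Module PinskerCalculus.
Import Coquelicot.Coquelicot.

Lemma mvt_from_1 (f f' : R -> R) :
  (forall x, 0 < x -> is_derive f x (f' x)) ->
  forall u, 0 < u ->
  exists c, 0 < c /\ (c - 1) * (u - 1) >= 0 /\ f u - f 1 = f' c * (u - 1).
Proof.
  intros Hd u Hu.
  destruct (MVT_gen f 1 u f') as [c [Hc Heq]].
  - intros x [Hx _]. apply Hd.
    eapply Rle_lt_trans; [| exact Hx]. apply Rmin_glb; lra.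
  - intros x [Hx _]. apply derivable_continuous_pt. exists (f' x).
    apply is_derive_Reals, Hd.
    eapply Rlt_le_trans; [| exact Hx]. apply Rmin_glb_lt; lra.
  - exists c. destruct (Rle_dec 1 u).
    + rewrite Rmin_left, Rmax_right in Hc by lra. split; [lra | split; [nra | exact Heq]].
    + rewrite Rmin_right, Rmax_left in Hc by lra. split; [lra | split; [nra | exact Heq]].
Qed.

(* ln x - 2(x-1)/(x+1) has derivative (x-1)^2/(x(x+1)^2) >= 0 and vanishes at 1. *)
Definition log_gap (x : R) := ln x - 2 * (x - 1) / (x + 1).

Lemma log_gap_sign u : 0 < u -> (u - 1) * log_gap u >= 0.
Proof.
  intros Hu.
  destruct (mvt_from_1 log_gap (fun x => / x - 4 / (x + 1) ^ 2)) with (u := u)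
    as [c [Hc [_ Heq]]]; auto.
  - intros x Hx. unfold log_gap. auto_derive; [repeat split; lra | field; lra].
  - assert (Hg1 : log_gap 1 = 0) by (unfold log_gap; rewrite ln_1; field).
    assert (Hd : / c - 4 / (c + 1) ^ 2 = (c - 1) ^ 2 / (c * (c + 1) ^ 2)) by (field; lra).
    assert (Hdpos : 0 <= (c - 1) ^ 2 / (c * (c + 1) ^ 2)).
    { apply div_nonneg; [apply pow2_ge_0 |].
      apply Rmult_lt_0_compat; [lra | apply pow_lt; lra]. }
    rewrite Hd, Hg1, Rminus_0_r in Heq. rewrite Heq.
    replace ((u - 1) * ((c - 1) ^ 2 / (c * (c + 1) ^ 2) * (u - 1))) with
      ((c - 1) ^ 2 / (c * (c + 1) ^ 2) * ((u - 1) * (u - 1))) by ring.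
    apply Rle_ge, Rmult_le_pos; [assumption | apply Rle_0_sqr].
Qed.

(* The difference of the two sides has derivative 4(x+1) log_gap x, which has the
   sign of x - 1, and vanishes at 1. *)
Lemma xlnx_quadratic_lower u : 0 < u -> 3 * (u - 1) ^ 2 <= (2 * u + 4) * (u * ln u - u + 1).
Proof.
  intros Hu.
  set (F x := (2 * x + 4) * (x * ln x - x + 1) - 3 * (x - 1) ^ 2).
  enough (0 <= F u) by (unfold F in *; lra).
  destruct (mvt_from_1 F (fun x => 4 * (x + 1) * log_gap x)) with (u := u)
    as [c [Hc [Hcu Heq]]]; auto.
  - intros x Hx. unfold F, log_gap. auto_derive; [lra | field; lra].
  - assert (HF1 : F 1 = 0) by (unfold F; rewrite ln_1; ring).
    pose proof (log_gap_sign c Hc) as Hsign.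
    destruct (Req_dec c 1) as [-> | Hc1].
    + assert (log_gap 1 = 0) by (unfold log_gap; rewrite ln_1; field). nra.
    + assert (0 <= log_gap c * (u - 1)).
      { assert (0 < (c - 1) ^ 2) by (apply pow2_gt_0; lra).
        assert (0 <= log_gap c * (u - 1) * (c - 1) ^ 2) by nra. nra. }
      nra.
Qed.

End PinskerCalculus.

Lemma abs_cont_iff m f g :
  abs_cont m f g = true <-> (forall a, (a < m)%nat -> g a = 0 -> f a = 0).
Proof.
  induction m as [|m IH]; simpl.
  - split; auto. intros _ a Ha. lia.
  - rewrite Bool.andb_true_iff, IH. split.
    + intros [H1 H2] a Ha Hg. destruct (Nat.eq_dec a m) as [-> | Hne].
      * destruct (Req_EM_T (g m) 0); [| contradiction].
        destruct (Req_EM_T (f m) 0); auto; discriminate.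
      * apply H1; auto; lia.
    + intros H. split; [intros a Ha; apply H; lia |].
      destruct (Req_EM_T (g m) 0) as [Hg |]; [| reflexivity].
      destruct (Req_EM_T (f m) 0) as [| Hf]; [reflexivity |].
      exfalso; apply Hf, H; [lia | exact Hg].
Qed.

Lemma KL_finite_inv m f g D : KL m f g = Some D ->
  (forall a, (a < m)%nat -> g a = 0 -> f a = 0) /\ D = sumR m (fun a => kl_term (f a) (g a)).
Proof.
  unfold KL. destruct (abs_cont m f g) eqn:E; intros H; inversion H.
  split; auto. apply abs_cont_iff; auto.
Qed.

Lemma KL_finite m f g : (forall a, (a < m)%nat -> g a = 0 -> f a = 0) ->
  KL m f g = Some (sumR m (fun a => kl_term (f a) (g a))).
Proof. intros H. unfold KL. apply abs_cont_iff in H. rewrite H. reflexivity. Qed.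

Lemma kl_term_0 y : kl_term 0 y = 0.
Proof. unfold kl_term. destruct (Req_EM_T 0 0); [reflexivity | congruence]. Qed.

Lemma kl_term_nz x y : x <> 0 -> kl_term x y = x * ln (x / y).
Proof. unfold kl_term. destruct (Req_EM_T x 0); [congruence | reflexivity]. Qed.

(** * Pinsker's inequality *)

Lemma two_mul_le_of_sq_le lam a b c : 0 < a -> c ^ 2 <= a * b -> 2 * lam * c <= lam ^ 2 * a + b.
Proof.
  intros Ha H.
  assert (Hid : a * (lam ^ 2 * a + b - 2 * lam * c) = (lam * a - c) ^ 2 + (a * b - c ^ 2)) by ring.
  assert (0 <= a * (lam ^ 2 * a + b - 2 * lam * c)).
  { rewrite Hid. apply Rplus_le_le_0_compat; [apply pow2_ge_0 | lra]. }
  nra.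
Qed.

(* Pointwise form of Pinsker: the letter-wise contribution to |g - y|_1 is
   controlled by a quadratic term plus the letter-wise (nonnegative) divergence. *)
Lemma pinsker_pointwise y g lam : 0 <= y -> 0 <= g -> (y = 0 -> g = 0) ->
  2 * lam * Rabs (g - y) <= lam ^ 2 * ((2 * g + 4 * y) / 3) + (kl_term g y - g + y).
Proof.
  intros Hy Hg Hyg.
  destruct (Req_EM_T y 0) as [Hy0 | Hy0].
  - rewrite (Hyg Hy0), Hy0, kl_term_0, Rminus_0_r, Rabs_R0. lra.
  - assert (Hyp : 0 < y) by lra.
    apply two_mul_le_of_sq_le; [lra |].
    rewrite <- Rsqr_pow2, <- Rsqr_abs, Rsqr_pow2.
    destruct (Req_EM_T g 0) as [Hg0 | Hg0].
    + rewrite Hg0, kl_term_0. nra.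
    + rewrite kl_term_nz by auto.
      set (u := g / y).
      assert (Hu : 0 < u) by (unfold u; apply Rdiv_lt_0_compat; lra).
      assert (Hg' : g = u * y) by (unfold u; field; lra).
      pose proof (PinskerCalculus.xlnx_quadratic_lower u Hu) as Hcalc.
      clearbody u. subst g.
      replace ((2 * (u * y) + 4 * y) / 3 * (u * y * ln u - u * y + y))
        with (y ^ 2 / 3 * ((2 * u + 4) * (u * ln u - u + 1))) by field.
      replace ((u * y - y) ^ 2) with (y ^ 2 / 3 * (3 * (u - 1) ^ 2)) by field.
      apply Rmult_le_compat_l; [| lra].
      apply Rmult_le_pos; [apply pow2_ge_0 | lra].
Qed.

Lemma pinsker m g y Dg : pmf m g -> pmf m y -> KL m g y = Some Dg -> l1 m g y ^ 2 / 2 <= Dg.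
Proof.
  intros [Hg0 Hg1] [Hy0 Hy1] HK. apply KL_finite_inv in HK as [Hac HD].
  set (lam := l1 m g y / 2).
  assert (H : sumR m (fun a => 2 * lam * Rabs (g a - y a)) <=
              sumR m (fun a => (lam ^ 2 * 2 / 3) * g a + (lam ^ 2 * 4 / 3) * y a
                               + (kl_term (g a) (y a) - g a + y a))).
  { apply sumR_le. intros a Ha.
    replace ((lam ^ 2 * 2 / 3) * g a + (lam ^ 2 * 4 / 3) * y a)
      with (lam ^ 2 * ((2 * g a + 4 * y a) / 3)) by field.
    apply pinsker_pointwise; auto. }
  rewrite sumR_scal, !sumR_plus, sumR_minus, !sumR_scal in H.
  fold (l1 m g y) in H. rewrite <- HD, Hg1, Hy1 in H. unfold lam in H. nra.
Qed.

(** * The Pythagorean inequality for I-projections *)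

(* Along the segment x_t = t f + (1 - t) g (from g towards f), the letter-wise
   increment kl(x_t, y) - kl(g, y) is at most t ((f - g) + B + t C + S ln t) with
   - B the first-order coefficient (f - g) ln (g / y), or kl(f, y) off the support of g;
   - C a bound on the curvature, 2 (f - g)^2 / g;
   - S the mass of f off the support of g, which forces an infinite negative slope. *)
Definition pyth_slope (y f g : R) : R :=
  if Req_EM_T y 0 then 0 else if Req_EM_T g 0 then kl_term f y else (f - g) * ln (g / y).
Definition pyth_curv (y f g : R) : R :=
  if Req_EM_T y 0 then 0 else if Req_EM_T g 0 then 0 else 2 * (f - g) ^ 2 / g.
Definition pyth_escape (y f g : R) : R :=
  if Req_EM_T y 0 then 0 else if Req_EM_T g 0 then f else 0.

Lemma pyth_curv_nonneg y f g : 0 <= g -> 0 <= pyth_curv y f g.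
Proof.
  intros Hg. unfold pyth_curv.
  destruct (Req_EM_T y 0); [lra |]. destruct (Req_EM_T g 0); [lra |].
  apply div_nonneg; [apply Rmult_le_pos; [lra | apply pow2_ge_0] | lra].
Qed.

Lemma pyth_escape_nonneg y f g : 0 <= f -> 0 <= pyth_escape y f g.
Proof.
  intros Hf. unfold pyth_escape.
  destruct (Req_EM_T y 0); [lra |]. destruct (Req_EM_T g 0); lra.
Qed.

Lemma pyth_escape_zero y f g : (y = 0 -> f = 0) -> pyth_escape y f g = 0 -> g = 0 -> f = 0.
Proof.
  intros Hyf E Hg. unfold pyth_escape in E.
  destruct (Req_EM_T y 0) as [Hy |]; [auto |].
  destruct (Req_EM_T g 0); [auto | contradiction].
Qed.

Definition mix (t : R) (f g : nat -> R) : nat -> R := fun a => t * f a + (1 - t) * g a.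

Lemma mix_pmf m t f g : pmf m f -> pmf m g -> 0 <= t <= 1 -> pmf m (mix t f g).
Proof.
  intros [Hf0 Hf1] [Hg0 Hg1] Ht. split.
  - intros a Ha. pose proof (Hf0 a Ha). pose proof (Hg0 a Ha). unfold mix. nra.
  - unfold mix. rewrite sumR_plus, !sumR_scal, Hf1, Hg1. ring.
Qed.

(* Second-order control of the log-ratio along the segment: for x = g + t d with
   t <= 1/2 (so x >= g/2), d ln (x / g) <= 2 t d^2 / g. *)
Lemma log_ratio_step d g x t : 0 < g -> 0 < x -> x = g + t * d -> 0 < t <= / 2 -> d >= - g ->
  d * ln (x / g) <= 2 * t * d ^ 2 / g.
Proof.
  intros Hg Hx Hxd Ht Hd.
  assert (Hu : 0 < x / g) by (apply Rdiv_lt_0_compat; lra).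
  assert (Hu1 : x / g - 1 = t * d / g) by (rewrite Hxd; field; lra).
  assert (Hq : 0 <= t * d ^ 2 / g).
  { apply div_nonneg; [apply Rmult_le_pos; [lra | apply pow2_ge_0] | lra]. }
  destruct (Rle_lt_dec 0 d) as [Hd0 | Hd0].
  - pose proof (ln_le_sub1 _ Hu).
    assert (d * ln (x / g) <= d * (t * d / g)) by (apply Rmult_le_compat_l; lra).
    replace (d * (t * d / g)) with (t * d ^ 2 / g) in * by (field; lra).
    lra.
  - pose proof (ln_ge_1_sub_inv _ Hu).
    assert (Hug : / 2 <= x / g).
    { apply (Rmult_le_reg_r g); [lra |].
      replace (x / g * g) with x by (field; lra). nra. }
    assert (Hinv : / (x / g) <= 2).
    { replace 2 with (/ / 2) by field. apply Rinv_le_contravar; lra. }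
    assert (d * ln (x / g) <= d * (1 - / (x / g))) by (apply Rmult_le_compat_neg_l; lra).
    replace (d * (1 - / (x / g))) with (t * d ^ 2 / g * / (x / g)) in *
      by (rewrite Hxd in *; field; repeat split; lra).
    assert (t * d ^ 2 / g * / (x / g) <= t * d ^ 2 / g * 2) by (apply Rmult_le_compat_l; auto).
    replace (2 * t * d ^ 2 / g) with (t * d ^ 2 / g * 2) by (field; lra).
    lra.
Qed.

Lemma kl_term_mix_increment y f g t : 0 <= y -> 0 <= f -> 0 <= g ->
  (y = 0 -> f = 0 /\ g = 0) -> 0 < t <= / 2 ->
  kl_term (t * f + (1 - t) * g) y - kl_term g y <=
  t * ((f - g) + (pyth_slope y f g + t * pyth_curv y f g + pyth_escape y f g * ln t)).
Proof.
  intros Hy Hf Hg Hyfg Ht. unfold pyth_slope, pyth_curv, pyth_escape.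
  destruct (Req_EM_T y 0) as [Hy0 | Hy0].
  - destruct (Hyfg Hy0) as [-> ->].
    replace (t * 0 + (1 - t) * 0) with 0 by ring. rewrite kl_term_0. lra.
  - assert (Hyp : 0 < y) by lra.
    destruct (Req_EM_T g 0) as [Hg0 | Hg0].
    + (* off the support of g: kl(t f, y) = t (kl(f, y) + f ln t) *)
      subst g. replace (t * f + (1 - t) * 0) with (t * f) by ring. rewrite kl_term_0.
      destruct (Req_EM_T f 0) as [Hf0 | Hf0].
      * subst f. replace (t * 0) with 0 by ring. rewrite kl_term_0. lra.
      * rewrite !kl_term_nz by (try apply Rmult_integral_contrapositive; lra).
        rewrite !ln_div, ln_mult by (try apply Rmult_lt_0_compat; lra). nra.
    + (* on the support of g: convexity of x ln x plus log_ratio_step *)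
      assert (Hgp : 0 < g) by lra.
      set (x := t * f + (1 - t) * g).
      assert (Hx : 0 < x) by (unfold x; nra).
      assert (Hxg : x - g = t * (f - g)) by (unfold x; ring).
      rewrite !kl_term_nz by lra.
      assert (Htan : g * ln (x / g) <= t * (f - g)).
      { pose proof (ln_le_sub1 (x / g) ltac:(apply Rdiv_lt_0_compat; lra)).
        rewrite <- Hxg. replace (x - g) with (g * (x / g - 1)) by (field; lra).
        apply Rmult_le_compat_l; lra. }
      pose proof (log_ratio_step (f - g) g x t Hgp Hx ltac:(unfold x; ring) Ht ltac:(lra))
        as Hstep.
      assert (Hsplit : x * ln (x / y) - g * ln (g / y)
                       = (x - g) * ln (x / g) + (x - g) * ln (g / y) + g * ln (x / g))
        by (rewrite !ln_div by lra; ring).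
      rewrite Hsplit, Hxg.
      assert (t * ((f - g) * ln (x / g)) <= t * (2 * t * (f - g) ^ 2 / g))
        by (apply Rmult_le_compat_l; lra).
      replace (t * (2 * t * (f - g) ^ 2 / g)) with (t * (t * (2 * (f - g) ^ 2 / g))) in *
        by (field; lra).
      nra.
Qed.

(* If 0 <= B + t C + s ln t for all small t > 0, then the logarithmic slope s
   vanishes (ln t -> -oo) ... *)
Lemma log_slope_vanishes B C s : 0 <= C -> 0 <= s ->
  (forall t, 0 < t <= / 2 -> 0 <= B + t * C + s * ln t) -> s = 0.
Proof.
  intros HC Hs H.
  destruct (Req_EM_T s 0) as [| Hne]; auto. exfalso.
  set (M := (Rabs B + 2) / s).
  set (t := Rmin (/ 2) (Rmin (/ (C + 1)) (exp (- M)))).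
  assert (Ht0 : 0 < t).
  { apply Rmin_glb_lt; [lra |].
    apply Rmin_glb_lt; [apply Rinv_0_lt_compat; lra | apply exp_pos]. }
  assert (Ht1 : t <= / 2) by apply Rmin_l.
  assert (Ht2 : t <= / (C + 1)) by (eapply Rle_trans; [apply Rmin_r | apply Rmin_l]).
  assert (Ht3 : t <= exp (- M)) by (eapply Rle_trans; [apply Rmin_r | apply Rmin_r]).
  pose proof (H t (conj Ht0 Ht1)) as Hb.
  assert (Hlog : ln t <= - M) by (rewrite <- (ln_exp (- M)); apply ln_le_compat; auto).
  assert (Hslog : s * ln t <= - (Rabs B + 2)).
  { assert (s * ln t <= s * (- M)) by (apply Rmult_le_compat_l; lra).
    replace (s * - M) with (- (Rabs B + 2)) in * by (unfold M; field; lra). lra. }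
  assert (HtC : t * C < 1).
  { assert (t * (C + 1) <= / (C + 1) * (C + 1)) by (apply Rmult_le_compat_r; lra).
    rewrite Rinv_l in * by lra. nra. }
  pose proof (Rle_abs B). lra.
Qed.

Lemma linear_coeff_nonneg B C : 0 <= C -> (forall t, 0 < t <= / 2 -> 0 <= B + t * C) -> 0 <= B.
Proof.
  intros HC H.
  destruct (Rle_lt_dec 0 B) as [| HB]; auto. exfalso.
  set (t := Rmin (/ 2) (- B / (2 * (C + 1)))).
  assert (Ht0 : 0 < t) by (apply Rmin_glb_lt; [lra | apply Rdiv_lt_0_compat; lra]).
  pose proof (H t (conj Ht0 (Rmin_l _ _))) as Hb.
  assert (t <= - B / (2 * (C + 1))) by apply Rmin_r.
  assert (t * (C + 1) <= - B / 2).
  { assert (t * (C + 1) <= - B / (2 * (C + 1)) * (C + 1)) by (apply Rmult_le_compat_r; lra).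
    replace (- B / (2 * (C + 1)) * (C + 1)) with (- B / 2) in * by (field; lra). lra. }
  nra.
Qed.

Lemma kl_term_three_point y f g : 0 <= y -> 0 <= f -> 0 <= g ->
  (y = 0 -> f = 0 /\ g = 0) -> (g = 0 -> f = 0) ->
  kl_term f y = kl_term g y + kl_term f g + pyth_slope y f g.
Proof.
  intros Hy Hf Hg Hyfg Hgf. unfold pyth_slope.
  destruct (Req_EM_T y 0) as [Hy0 | Hy0].
  - destruct (Hyfg Hy0) as [-> ->]. rewrite !kl_term_0. ring.
  - destruct (Req_EM_T g 0) as [Hg0 | Hg0].
    + rewrite (Hgf Hg0), Hg0, !kl_term_0. ring.
    + destruct (Req_EM_T f 0) as [Hf0 | Hf0].
      * subst f. rewrite !kl_term_0, kl_term_nz, ln_div by lra. ring.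
      * rewrite !kl_term_nz, !ln_div by lra. ring.
Qed.

(* Summed increment bound: D(x_t||y) - D(g||y) <= t (B + t C + S ln t) with the
   totals B, C, S of the letter-wise coefficients (the f - g terms sum to 0). *)
Lemma KL_mix_increment m y g f t : pmf m y -> pmf m g -> pmf m f ->
  (forall a, (a < m)%nat -> y a = 0 -> f a = 0 /\ g a = 0) -> 0 < t <= / 2 ->
  sumR m (fun a => kl_term (mix t f g a) (y a)) - sumR m (fun a => kl_term (g a) (y a)) <=
  t * (sumR m (fun a => pyth_slope (y a) (f a) (g a))
       + t * sumR m (fun a => pyth_curv (y a) (f a) (g a))
       + sumR m (fun a => pyth_escape (y a) (f a) (g a)) * ln t).
Proof.
  intros [Hy0 _] [Hg0 Hg1] [Hf0 Hf1] Hyfg Ht.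
  rewrite <- sumR_minus.
  eapply Rle_trans.
  { apply sumR_le. intros a Ha. apply kl_term_mix_increment; auto. }
  rewrite sumR_scal, !sumR_plus, sumR_minus, sumR_scal, Hf1, Hg1.
  replace (sumR m (fun a => pyth_escape (y a) (f a) (g a) * ln t))
    with (ln t * sumR m (fun a => pyth_escape (y a) (f a) (g a)))
    by (rewrite <- sumR_scal; apply sumR_ext; intros; ring).
  lra.
Qed.

Lemma KL_pythagorean m y g f D Dg : pmf m y -> pmf m g -> pmf m f ->
  KL m f y = Some D -> KL m g y = Some Dg ->
  (forall t, 0 < t <= / 2 -> ext_le (Some Dg) (KL m (mix t f g) y)) ->
  exists Dfg, KL m f g = Some Dfg /\ Dg + Dfg <= D.
Proof.
  intros Hy Hg Hf HKf HKg Hmin.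
  destruct Hy as [Hy0 Hy1], Hg as [Hg0 Hg1], Hf as [Hf0 Hf1].
  apply KL_finite_inv in HKf as [Hacf HD]. apply KL_finite_inv in HKg as [Hacg HDg].
  assert (Hyfg : forall a, (a < m)%nat -> y a = 0 -> f a = 0 /\ g a = 0) by auto.
  set (B := sumR m (fun a => pyth_slope (y a) (f a) (g a))).
  set (C := sumR m (fun a => pyth_curv (y a) (f a) (g a))).
  set (S := sumR m (fun a => pyth_escape (y a) (f a) (g a))).
  assert (Hopt : forall t, 0 < t <= / 2 -> 0 <= B + t * C + S * ln t).
  { intros t Ht. specialize (Hmin t Ht).
    rewrite KL_finite in Hmin
      by (intros a Ha Hya; unfold mix; destruct (Hyfg a Ha Hya) as [-> ->]; ring).
    simpl in Hmin.
    pose proof (KL_mix_increment m y g f t ltac:(split; auto) ltac:(split; auto)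
                  ltac:(split; auto) Hyfg Ht) as Hinc.
    fold B C S in Hinc. rewrite <- HDg in Hinc.
    destruct (Rle_lt_dec 0 (B + t * C + S * ln t)); auto. nra. }
  assert (HC : 0 <= C) by (apply sumR_nonneg; intros; apply pyth_curv_nonneg; auto).
  assert (HSn : forall a, (a < m)%nat -> 0 <= pyth_escape (y a) (f a) (g a))
    by (intros; apply pyth_escape_nonneg; auto).
  assert (HS0 : S = 0) by (apply (log_slope_vanishes B C S HC (sumR_nonneg _ _ HSn) Hopt)).
  assert (HB : 0 <= B).
  { apply (linear_coeff_nonneg B C HC). intros t Ht.
    pose proof (Hopt t Ht) as Ho. rewrite HS0, Rmult_0_l, Rplus_0_r in Ho. exact Ho. }
  (* S = 0 means f << g *)
  assert (Hgf : forall a, (a < m)%nat -> g a = 0 -> f a = 0).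
  { intros a Ha. apply (pyth_escape_zero (y a)); [apply Hacf; auto |].
    apply (sumR_zero_each _ _ HSn); [fold S; lra | exact Ha]. }
  exists (sumR m (fun a => kl_term (f a) (g a))). split; [apply KL_finite; auto |].
  assert (D = Dg + sumR m (fun a => kl_term (f a) (g a)) + B).
  { rewrite HD, HDg. unfold B. rewrite <- !sumR_plus. apply sumR_ext.
    intros a Ha. apply kl_term_three_point; auto. }
  lra.
Qed.

Definition lsum {A} (l : list A) (F : A -> R) : R := fold_right Rplus 0 (map F l).

Lemma lsum_cons {A} x l (F : A -> R) : lsum (x :: l) F = F x + lsum l F.
Proof. reflexivity. Qed.

Lemma lsum_app {A} l1 l2 (F : A -> R) : lsum (l1 ++ l2) F = lsum l1 F + lsum l2 F.
Proof. induction l1 as [|x l1 IH]; unfold lsum in *; simpl; [ring | rewrite IH; ring]. Qed.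

Lemma lsum_flat_map {A B} (G : A -> list B) l F :
  lsum (flat_map G l) F = lsum l (fun x => lsum (G x) F).
Proof. induction l as [|x l IH]; simpl; [reflexivity | rewrite lsum_app, IH; reflexivity]. Qed.

Lemma lsum_map {A B} (h : A -> B) l F : lsum (map h l) F = lsum l (fun x => F (h x)).
Proof. unfold lsum. rewrite map_map. reflexivity. Qed.

Lemma lsum_plus {A} l (F G : A -> R) : lsum l (fun x => F x + G x) = lsum l F + lsum l G.
Proof. induction l as [|x l IH]; [unfold lsum; simpl; ring | rewrite !lsum_cons, IH; ring]. Qed.

Lemma lsum_scal {A} l c (F : A -> R) : lsum l (fun x => c * F x) = c * lsum l F.
Proof. induction l as [|x l IH]; [unfold lsum; simpl; ring | rewrite !lsum_cons, IH; ring]. Qed.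

Lemma lsum_ext {A} l (F G : A -> R) : (forall x, In x l -> F x = G x) -> lsum l F = lsum l G.
Proof.
  induction l as [|x l IH]; intros H; [reflexivity |].
  rewrite !lsum_cons, IH, H; simpl; auto. intros; apply H; simpl; auto.
Qed.

Lemma lsum_le {A} l (F G : A -> R) : (forall x, In x l -> F x <= G x) -> lsum l F <= lsum l G.
Proof.
  induction l as [|x l IH]; intros H; [unfold lsum; simpl; lra |]. rewrite !lsum_cons.
  assert (F x <= G x) by (apply H; simpl; auto).
  assert (lsum l F <= lsum l G) by (apply IH; intros; apply H; simpl; auto).
  lra.
Qed.

Lemma lsum_const {A} l (c : R) : lsum l (fun _ : A => c) = INR (length l) * c.
Proof.
  induction l as [|x l IH]; [unfold lsum; simpl; ring |].
  rewrite lsum_cons, IH. simpl length. rewrite S_INR. ring.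
Qed.

Lemma lsum_swap {A B} (l1 : list A) (l2 : list B) F :
  lsum l1 (fun x => lsum l2 (fun y => F x y)) = lsum l2 (fun y => lsum l1 (fun x => F x y)).
Proof.
  induction l1 as [|x l1 IH].
  - rewrite (lsum_ext l2 _ (fun _ => 0)) by reflexivity. rewrite lsum_const. unfold lsum; simpl. ring.
  - rewrite lsum_cons, IH, <- lsum_plus. apply lsum_ext; intros. rewrite lsum_cons. reflexivity.
Qed.

Lemma lsum_single {A} l x (F : A -> R) :
  In x l -> (forall y, In y l -> 0 <= F y) -> F x <= lsum l F.
Proof.
  intros Hx H. rewrite <- Rplus_0_r at 1.
  induction l as [|z l IH]; [destruct Hx |]. rewrite lsum_cons. destruct Hx as [<- | Hx].
  - apply Rplus_le_compat_l. rewrite <- (Rmult_0_r (INR (length l))), <- lsum_const.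
    apply lsum_le. intros; apply H; simpl; auto.
  - assert (0 <= F z) by (apply H; simpl; auto).
    assert (F x + 0 <= lsum l F) by (apply IH; auto; intros; apply H; simpl; auto).
    lra.
Qed.

Lemma lsum_seq m F : lsum (seq 0 m) F = sumR m F.
Proof.
  induction m as [|m IH]; [reflexivity |].
  rewrite seq_S, lsum_app, IH. unfold lsum; simpl. ring.
Qed.

Lemma words_mem m n w : In w (words m n) -> length w = n /\ (forall a, In a w -> (a < m)%nat).
Proof.
  revert w; induction n as [|n IH]; simpl; intros w H.
  - destruct H as [<- | []]. split; [reflexivity | intros a []].
  - apply in_flat_map in H as [v [Hv Hw]]. apply in_map_iff in Hw as [a [<- Ha]].
    apply in_seq in Ha. destruct (IH v Hv) as [H1 H2]. simpl. split; [lia |].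
    intros b [<- | Hb]; [lia | auto].
Qed.

Lemma words_in m n w : length w = n -> (forall a, In a w -> (a < m)%nat) -> In w (words m n).
Proof.
  revert n; induction w as [|a w IH]; intros n Hl H; simpl in Hl; subst n; simpl; [auto |].
  apply in_flat_map. exists w. split; [apply IH; auto; intros; apply H; simpl; auto |].
  apply in_map_iff. exists a. split; auto.
  apply in_seq. assert (a < m)%nat by (apply H; simpl; auto). lia.
Qed.

Lemma words_len m n : length (words m n) = (m ^ n)%nat.
Proof.
  induction n as [|n IH]; simpl; auto.
  rewrite flat_map_concat_map, length_concat, map_map, <- IH. clear IH.
  induction (words m n) as [|w l IHl]; simpl; [lia |].
  rewrite length_map, length_seq, IHl. lia.
Qed.

Lemma word_prob_sum m n g : lsum (words m n) (word_prob g) = (sumR m g) ^ n.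
Proof.
  induction n as [|n IH]; simpl; [unfold lsum; simpl; ring |].
  rewrite lsum_flat_map, <- IH, <- lsum_scal. apply lsum_ext. intros w _.
  rewrite lsum_map, <- lsum_seq, Rmult_comm, <- lsum_scal. apply lsum_ext; intros; simpl; ring.
Qed.

Lemma word_prob_ext g h w : (forall b, In b w -> g b = h b) -> word_prob g w = word_prob h w.
Proof.
  induction w as [|a w IH]; intros H; simpl; auto.
  rewrite IH, H; simpl; auto. intros; apply H; simpl; auto.
Qed.

Lemma word_prob_nonneg g w : (forall b, In b w -> 0 <= g b) -> 0 <= word_prob g w.
Proof.
  induction w as [|a w IH]; intros H; simpl; [lra |].
  apply Rmult_le_pos; [apply H; simpl; auto | apply IH; intros; apply H; simpl; auto].
Qed.

Lemma word_prob_zero g w b : In b w -> g b = 0 -> word_prob g w = 0.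
Proof.
  induction w as [|a w IH]; intros Hb Hg; simpl; [destruct Hb |].
  destruct Hb as [-> | Hb]; [rewrite Hg; ring | rewrite IH; auto; ring].
Qed.

Lemma word_prob_exp g w :
  (forall b, In b w -> 0 < g b) -> word_prob g w = exp (lsum w (fun a => ln (g a))).
Proof.
  induction w as [|a w IH]; intros H; simpl.
  - unfold lsum; simpl. rewrite exp_0. reflexivity.
  - rewrite lsum_cons, exp_plus, exp_ln, IH; auto; intros; apply H; simpl; auto.
Qed.

Lemma sumR_indicator m b h : (b < m)%nat ->
  sumR m (fun a => (if Nat.eqb b a then 1 else 0) * h a) = h b.
Proof.
  induction m as [|m IH]; intros Hb; [lia |]. simpl.
  destruct (Nat.eq_dec b m) as [-> | Hne].
  - rewrite Nat.eqb_refl, (sumR_ext _ _ (fun a => 0 * h a)).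
    + rewrite sumR_scal. ring.
    + intros a Ha. destruct (Nat.eqb_spec m a); [lia | ring].
  - rewrite IH by lia. destruct (Nat.eqb_spec b m); [lia | ring].
Qed.

Lemma lsum_by_counts m w h : (forall a, In a w -> (a < m)%nat) ->
  lsum w h = sumR m (fun a => INR (count a w) * h a).
Proof.
  induction w as [|b w IH]; intros H.
  - rewrite (sumR_ext _ _ (fun a => 0 * h a)) by reflexivity. rewrite sumR_scal.
    unfold lsum; simpl. ring.
  - rewrite lsum_cons, IH by (intros; apply H; simpl; auto).
    rewrite <- (sumR_indicator m b h) by (apply H; simpl; auto).
    rewrite <- sumR_plus. apply sumR_ext.
    intros a _. simpl. destruct (Nat.eqb b a); [rewrite S_INR |]; ring.
Qed.

Lemma count_le a w : (count a w <= length w)%nat.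
Proof. induction w as [|b w IH]; simpl; auto. destruct (Nat.eqb b a); lia. Qed.

Lemma count_pos_iff a w : (0 < count a w)%nat <-> In a w.
Proof.
  induction w as [|b w IH]; simpl; [split; [lia | intros []] |].
  destruct (Nat.eqb_spec b a) as [-> | Hne]; [split; auto; lia |].
  rewrite IH. split; [auto | intros [-> | H]; [contradiction | exact H]].
Qed.

Lemma emp_nonneg w a : (1 <= length w)%nat -> 0 <= emp w a.
Proof.
  intros H. unfold emp. apply div_nonneg; [apply pos_INR | apply lt_0_INR; lia].
Qed.

Lemma emp_pmf m n w : In w (words m n) -> (1 <= n)%nat -> pmf m (emp w).
Proof.
  intros Hw Hn. destruct (words_mem _ _ _ Hw) as [Hl Ha]. split.
  - intros; apply emp_nonneg; lia.
  - pose proof (lsum_by_counts m w (fun _ => 1) Ha) as E.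
    rewrite lsum_const in E. unfold emp.
    rewrite (sumR_ext _ _ (fun a => / INR (length w) * (INR (count a w) * 1)))
      by (intros; unfold Rdiv; ring).
    rewrite sumR_scal, <- E, Hl. field. apply not_0_INR. lia.
Qed.

Lemma word_prob_by_type m n f0 w : pmf m f0 -> In w (words m n) -> (1 <= n)%nat ->
  (forall b, In b w -> f0 b <> 0) ->
  exists D, KL m (emp w) f0 = Some D /\
            word_prob f0 w = word_prob (emp w) w * exp (- INR n * D).
Proof.
  intros [Hf0 _] Hw Hn Hb. destruct (words_mem _ _ _ Hw) as [Hl Ha].
  assert (Hnp : 0 < INR n) by (apply lt_0_INR; lia).
  assert (Hpos0 : forall b, In b w -> 0 < f0 b).
  { intros b Hb'. pose proof (Hf0 b (Ha b Hb')). pose proof (Hb b Hb'). lra. }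
  assert (Hposf : forall b, In b w -> 0 < emp w b).
  { intros b Hb'. unfold emp. rewrite Hl.
    apply Rdiv_lt_0_compat; auto. apply lt_0_INR, count_pos_iff; auto. }
  assert (Hzero : forall a, ~ In a w -> emp w a = 0).
  { intros a Hna. unfold emp. destruct (count a w) eqn:E.
    - simpl. unfold Rdiv; ring.
    - exfalso. apply Hna, count_pos_iff. lia. }
  exists (sumR m (fun a => kl_term (emp w a) (f0 a))). split.
  { apply KL_finite. intros a _ Hfa. apply Hzero. intros Hin. apply (Hb a Hin Hfa). }
  rewrite !word_prob_exp, <- exp_plus by auto. f_equal.
  rewrite !(lsum_by_counts m) by auto.
  enough (INR n * sumR m (fun a => kl_term (emp w a) (f0 a)) =
          sumR m (fun a => INR (count a w) * ln (emp w a))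
          - sumR m (fun a => INR (count a w) * ln (f0 a))) by lra.
  rewrite <- sumR_minus, <- sumR_scal. apply sumR_ext. intros a _.
  destruct (classic (In a w)) as [Hin | Hna].
  - pose proof (Hposf a Hin). pose proof (Hpos0 a Hin).
    rewrite kl_term_nz, ln_div by lra.
    replace (INR (count a w)) with (INR n * emp w a) by (unfold emp; rewrite Hl; field; lra).
    ring.
  - rewrite (Hzero a Hna), kl_term_0.
    replace (count a w) with 0%nat by (destruct (count a w) eqn:E; auto;
                                       exfalso; apply Hna, count_pos_iff; lia).
    simpl. ring.
Qed.

(** * The method of types *)

(* The vector k / n, for a count vector k in {0,...,n}^m (a word of length m over {0,...,n}). *)
Definition type_of_counts (n : nat) (k : list nat) : nat -> R :=
  fun a => INR (nth a k 0%nat) / INR n.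

Lemma nth_map_seq m (F : nat -> nat) a : (a < m)%nat -> nth a (map F (seq 0 m)) 0%nat = F a.
Proof.
  intros H. rewrite (nth_indep _ _ (F 0%nat)) by (rewrite length_map, length_seq; lia).
  rewrite map_nth, seq_nth by lia. reflexivity.
Qed.

Lemma indic_bounds P : 0 <= indic P <= 1.
Proof. unfold indic. destruct (excluded_middle_informative P); lra. Qed.

(* The maximum-likelihood probability of a word is one term of the sum over all
   count vectors that are p.m.f.s, namely the term of its own type. *)
Lemma ml_prob_le_types m n w : In w (words m n) -> (1 <= n)%nat ->
  word_prob (emp w) w <=
  lsum (words (S n) m)
    (fun k => word_prob (type_of_counts n k) w * indic (sumR m (type_of_counts n k) = 1)).
Proof.
  intros Hw Hn. destruct (words_mem _ _ _ Hw) as [Hl Ha].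
  set (k0 := map (fun a => count a w) (seq 0 m)).
  assert (Hk0 : forall a, (a < m)%nat -> type_of_counts n k0 a = emp w a).
  { intros a Ham. unfold type_of_counts, emp, k0. rewrite nth_map_seq, Hl; auto. }
  assert (Hk0in : In k0 (words (S n) m)).
  { apply words_in; [unfold k0; rewrite length_map, length_seq; auto |].
    intros x Hx. unfold k0 in Hx. apply in_map_iff in Hx as [a [<- _]].
    pose proof (count_le a w). lia. }
  eapply Rle_trans; [| apply (lsum_single _ k0); auto].
  - apply Req_le.
    rewrite (word_prob_ext (type_of_counts n k0) (emp w)) by (intros; apply Hk0; auto).
    rewrite (sumR_ext _ _ (emp w)) by auto. destruct (emp_pmf m n w Hw Hn) as [_ ->].
    unfold indic. destruct (excluded_middle_informative (1 = 1)); [ring | congruence].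
  - intros k _. apply Rmult_le_pos; [| apply indic_bounds].
    apply word_prob_nonneg. intros b _. apply div_nonneg; [apply pos_INR | apply lt_0_INR; lia].
Qed.

(* Each count vector that is a p.m.f. defines a product probability on words, so the
   double sum is at most the number (n+1)^m of count vectors. *)
Lemma types_mass_le m n :
  lsum (words m n) (fun w => lsum (words (S n) m)
    (fun k => word_prob (type_of_counts n k) w * indic (sumR m (type_of_counts n k) = 1)))
  <= (INR n + 1) ^ m.
Proof.
  rewrite lsum_swap.
  apply Rle_trans with (lsum (words (S n) m) (fun _ => 1)).
  - apply lsum_le. intros k _.
    rewrite (lsum_ext _ _ (fun w => indic (sumR m (type_of_counts n k) = 1)
                                    * word_prob (type_of_counts n k) w)) by (intros; ring).
    rewrite lsum_scal, word_prob_sum. unfold indic.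
    destruct (excluded_middle_informative (sumR m (type_of_counts n k) = 1)) as [-> |];
      [rewrite pow1 |]; lra.
  - rewrite lsum_const, words_len, pow_INR, S_INR. lra.
Qed.

Lemma ml_prob_sum_le m n : (1 <= n)%nat ->
  lsum (words m n) (fun w => word_prob (emp w) w) <= (INR n + 1) ^ m.
Proof.
  intros Hn. eapply Rle_trans; [| apply types_mass_le].
  apply lsum_le. intros w Hw. apply ml_prob_le_types; auto.
Qed.

Lemma word_prob_rate_bound m n f0 (E : (nat -> R) -> Prop) r w :
  pmf m f0 -> (1 <= n)%nat -> In w (words m n) ->
  (forall f D, pmf m f -> E f -> KL m f f0 = Some D -> r <= D) ->
  word_prob f0 w * indic (E (emp w)) <= exp (- INR n * r) * word_prob (emp w) w.
Proof.
  intros Hf0 Hn Hw Hrate. destruct (words_mem _ _ _ Hw) as [Hl Ha].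
  assert (Hml : 0 <= word_prob (emp w) w)
    by (apply word_prob_nonneg; intros; apply emp_nonneg; lia).
  assert (HE : 0 <= exp (- INR n * r)) by (left; apply exp_pos).
  unfold indic. destruct (excluded_middle_informative (E (emp w))) as [HEw |]; [| nra].
  destruct (classic (exists b, In b w /\ f0 b = 0)) as [[b [Hb Hb0]] | Hno].
  - rewrite (word_prob_zero f0 w b Hb Hb0). nra.
  - destruct (word_prob_by_type m n f0 w Hf0 Hw Hn) as [D [HK ->]].
    { intros b Hb Hb0. apply Hno. exists b; auto. }
    pose proof (Hrate _ _ (emp_pmf m n w Hw Hn) HEw HK).
    assert (0 < INR n) by (apply lt_0_INR; lia).
    rewrite Rmult_1_r, Rmult_comm. apply Rmult_le_compat_r; auto.
    apply exp_le_compat. nra.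
Qed.

Lemma Pinf_types_bound m n f0 (E : (nat -> R) -> Prop) r : pmf m f0 -> (1 <= n)%nat ->
  (forall f D, pmf m f -> E f -> KL m f f0 = Some D -> r <= D) ->
  Pinf m n f0 E <= (INR n + 1) ^ m * exp (- INR n * r).
Proof.
  intros Hf0 Hn Hrate.
  change (lsum (words m n) (fun w => word_prob f0 w * indic (E (emp w)))
          <= (INR n + 1) ^ m * exp (- INR n * r)).
  eapply Rle_trans.
  { apply lsum_le. intros w Hw. apply (word_prob_rate_bound m n f0 E r w); auto. }
  rewrite lsum_scal, Rmult_comm.
  apply Rmult_le_compat_r; [left; apply exp_pos | apply ml_prob_sum_le; auto].
Qed.

Lemma lipschitz_const_pos m q L f g : lipschitz m q L -> pmf m f -> pmf m g -> q g < q f -> 0 < L.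
Proof.
  intros HL Hf Hg Hlt.
  pose proof (HL f g Hf Hg). pose proof (l1_nonneg m f g).
  assert (0 < Rabs (q f - q g)) by (rewrite Rabs_pos_eq; lra).
  destruct (Rle_lt_dec L 0); auto. nra.
Qed.

Lemma margin_le_l1 m q L f0 g cS : lipschitz m q L -> 0 < L -> pmf m g -> pmf m f0 ->
  cS <= q g -> Rmax (cS - q f0) 0 ^ 2 / (2 * L ^ 2) <= l1 m g f0 ^ 2 / 2.
Proof.
  intros HL HLpos Hg Hf0 HqS.
  pose proof (HL g f0 Hg Hf0) as Hlip. pose proof (l1_nonneg m g f0) as Hl1.
  set (l := l1 m g f0) in *. set (r := Rmax (cS - q f0) 0).
  assert (Hr : 0 <= r <= L * l).
  { split; [apply Rmax_r |]. apply Rmax_lub; [| nra].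
    pose proof (Rle_abs (q g - q f0)). lra. }
  assert (r ^ 2 <= (L * l) ^ 2) by (apply pow_incr; auto).
  apply (Rmult_le_reg_r (2 * L ^ 2)); [nra |].
  replace (r ^ 2 / (2 * L ^ 2) * (2 * L ^ 2)) with (r ^ 2) by (field; lra).
  replace (l ^ 2 / 2 * (2 * L ^ 2)) with ((L * l) ^ 2) by (field; lra).
  assumption.
Qed.

(* The constraint set {q >= cS} is convex (q is quasiconcave), so the I-projection
   is optimal along every segment towards a feasible f: the Pythagorean inequality
   D(f||f0) >= D(fstar||f0) + D(f||fstar) applies. *)
Lemma Iproj_pythagorean m q cS f0 fstar f D :
  pmf m f0 -> quasiconcave m q -> is_Iproj m q cS f0 fstar ->
  pmf m f -> cS <= q f -> KL m f f0 = Some D ->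
  exists Dg Dfg, KL m fstar f0 = Some Dg /\ KL m f fstar = Some Dfg /\ Dg + Dfg <= D.
Proof.
  intros Hf0 Hqc [Hs_pmf [Hs_q Hs_min]] Hf HqF HK.
  pose proof (Hs_min f Hf HqF) as Hm. rewrite HK in Hm.
  destruct (KL m fstar f0) as [Dg |] eqn:HKg; [| destruct Hm].
  destruct (KL_pythagorean m f0 fstar f D Dg Hf0 Hs_pmf Hf HK HKg) as [Dfg [HKfg Hle]].
  - intros t Ht.
    assert (Hmix : pmf m (mix t f fstar)) by (apply mix_pmf; auto; lra).
    apply (Hs_min _ Hmix).
    eapply Rle_trans; [| apply (Hqc f fstar t Hf Hs_pmf); lra].
    apply Rmin_glb; auto.
  - exists Dg, Dfg. auto.
Qed.

(* Every p.m.f. of the acceptance region is at divergence >= cD + (cS - q0)^+^2/(2L^2)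
   from f0: Pythagoras, then Pinsker and the Lipschitz margin for D(fstar||f0). *)
Lemma Gamma1_KL_lower m q L f0 cS cD fstar f D :
  pmf m f0 -> quasiconcave m q -> lipschitz m q L -> 0 < L -> is_Iproj m q cS f0 fstar ->
  pmf m f -> Gamma1 m q cS cD fstar f -> KL m f f0 = Some D ->
  cD + Rmax (cS - q f0) 0 ^ 2 / (2 * L ^ 2) <= D.
Proof.
  intros Hf0 Hqc HL HLpos Hfs Hf [HqF HKge] HK.
  destruct (Iproj_pythagorean m q cS f0 fstar f D Hf0 Hqc Hfs Hf HqF HK)
    as [Dg [Dfg [HKg [HKfg Hpyth]]]].
  destruct Hfs as [Hs_pmf [Hs_q _]].
  unfold KL_ge in HKge. rewrite HKfg in HKge. simpl in HKge.
  pose proof (pinsker m fstar f0 Dg Hs_pmf Hf0 HKg).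
  pose proof (margin_le_l1 m q L f0 fstar cS HL HLpos Hs_pmf Hf0 Hs_q).
  lra.
Qed.

Theorem theorem1 (m : nat) (f0 : nat -> R) (q : (nat -> R) -> R) (L qbar : R)
  (P1 : (nat -> R) -> Prop)
  (Hf0 : pmf m f0) (Hqc : quasiconcave m q) (HL : lipschitz m q L)
  (Hq0 : q f0 < 0) (Hqbar : 0 < qbar)
  (HP1ne : exists f, P1 f) (HP1 : forall f, P1 f -> pmf m f /\ qbar <= q f)
  (cS cD : R) (HcS : exists f, pmf m f /\ cS < q f) (HcD : 0 <= cD)
  (fstar : nat -> R) (Hfstar : is_Iproj m q cS f0 fstar)
  (n : nat) (Hn : (1 <= n)%nat) :
  Pinf m n f0 (Gamma1 m q cS cD fstar) <=
  (INR n + 1) ^ m *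
  exp (- INR n * (cD + (Rmax (cS - q f0) 0) ^ 2 / (2 * L ^ 2))).
Proof.
  (* q is not constant (q f0 < 0 < qbar <= q f1), so L > 0. *)
  assert (HLpos : 0 < L).
  { destruct HP1ne as [f1 Hf1]. destruct (HP1 f1 Hf1) as [Hpmf1 Hq1].
    apply (lipschitz_const_pos m q L f1 f0); auto; lra. }
  apply Pinf_types_bound; auto.
  intros f D Hf HG HK. apply (Gamma1_KL_lower m q L f0 cS cD fstar f D); auto.
Qed.
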